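(* Given an arbitrary sequence of instances $\{\mathcal{I}_N\}_{N=1}^{\infty}$ and an arbitrary regular strategy profile sequence $\{\Sigma_{N}\}_{N=1}^{\infty}$, let $\{A(\Sigma_{N})\}_{N=1}^{\infty}$ be the sequence of the fidelities of $\Sigma_N$. (1) If $\lim_{N\to \infty} A(\Sigma_{N}) = 1$, then for every $N$, $\Sigma_{N}$ is an $\varepsilon$-strong Bayes Nash Equilibrium with $\varepsilon = o(1)$. (2) If $\lim_{N\to \infty} A(\Sigma_{N}) = 1$ does not hold, then there exist infinitely many $N$ such that $\Sigma_{N}$ is NOT an $\varepsilon$-strong Bayes Nash Equilibrium for some constant $\varepsilon>0$.
   Context: Binary voting model. $N$ agents vote for one of two alternatives $\mathbf{A}$ (accept) and $\mathbf{R}$ (reject). There are two world states $L,H$ with common prior $P_L=\Pr[W=L]>0$, $P_H=\Pr[W=H]>0$; the state is not observed. Each agent receives a private signal in $\{l,h\}$, i.i.d. conditioned on the state, with $P_{sw}=\Pr[\text{signal}=s\mid W=w]$ common knowledge and $P_{hH}>P_{hL}$, $P_{lH}<P_{lL}$. Majority vote with threshold $\mu$: $\mathbf{A}$ wins iff at least $\mu N$ agents vote for $\mathbf{A}$. Each agent $n$ has utility $v_n:\{L,H\}\times\{\mathbf{A},\mathbf{R}\}\to\{0,1,\dots,B\}$ ($B$ a positive integer) with $v_n(H,\mathbf{A})>v_n(L,\mathbf{A})$ and $v_n(H,\mathbf{R})<v_n(L,\mathbf{R})$. Friendly agents satisfy $v_n(H,\mathbf{A})>v_n(L,\mathbf{A})>v_n(L,\mathbf{R})>v_n(H,\mathbf{R})$;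 unfriendly agents satisfy $v_n(L,\mathbf{R})>v_n(H,\mathbf{R})>v_n(H,\mathbf{A})>v_n(L,\mathbf{A})$; contingent agents satisfy $v_n(H,\mathbf{A})>v_n(H,\mathbf{R})$ and $v_n(L,\mathbf{R})>v_n(L,\mathbf{A})$. There are $\lfloor\alpha_F N\rfloor$ friendly, $\lfloor\alpha_U N\rfloor$ unfriendly and the rest contingent agents, with $\alpha_F,\alpha_U,\alpha_C$ fixed and common knowledge; neither friendly nor unfriendly agents alone can determine the outcome, so the informed majority decision is $\mathbf{A}$ in state $H$ and $\mathbf{R}$ in state $L$. A (mixed) strategy maps the signal to a probability of voting $\mathbf{A}$; a strategy profile is regular if all friendly agents always vote $\mathbf{A}$ and all unfriendly agents always vote $\mathbf{R}$. With $\lambda_w^{\mathbf{A}}(\Sigma)$, $\lambda_w^{\mathbf{R}}(\Sigma)$ the ex-ante probabilities that $\mathbf{A}$, resp. $\mathbf{R}$, wins in state $w$, the fidelity is $A(\Sigma)=P_L\lambda_L^{\mathbf{R}}(\Sigma)+P_H\lambda_H^{\mathbf{A}}(\Sigma)$ and the ex-ante expected utility is $u_n(\Sigma)=\sum_{w\in\{L,H\}}P_w(\lambda_w^{\mathbf{A}}(\Sigma)v_n(w,\mathbf{A})+\lambda_w^{\mathbf{R}}(\Sigma)v_n(w,\mathbf{R}))$. A sequence of instances $\{\mathcal{I}_N\}$ shares $\mu$, prior, signal distribution and type fractions (utilities may vary arbitrarily with $N$); $\Sigma_N$ is a profile in $\mathcal{I}_N$. A profile $\Sigma$ is an $\varepsilon$-strong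 Bayes Nash Equilibrium if there is no coalition $D$ and profile $\Sigma'$ agreeing with $\Sigma$ outside $D$ such that $u_n(\Sigma')\ge u_n(\Sigma)$ for all $n\in D$ and $u_n(\Sigma')>u_n(\Sigma)+\varepsilon$ for some $n\in D$. *)

From HB Require Import structures.
From mathcomp Require Import all_boot all_order all_algebra.
From mathcomp Require Import all_classical all_reals all_analysis.
Set Implicit Arguments. Unset Strict Implicit. Unset Printing Implicit Defensive.
Import Order.TTheory GRing.Theory Num.Theory.
Local Open Scope ring_scope.

Inductive world := L | H.
Inductive alt := Acc | Rej.

(* Signals: [true] = h, [false] = l. *)
Definition signal := bool.

Section Model.
Variable R : realType.

Definition utility_fn := world -> alt -> nat.

Definition basic_util (v : utility_fn) : Prop :=
  (v H Acc > v L Acc)%N /\ (v H Rej < v L Rej)%N.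

Definition friendly (v : utility_fn) : Prop :=
  (v H Acc > v L Acc)%N /\ (v L Acc > v L Rej)%N /\ (v L Rej > v H Rej)%N.
Definition unfriendly (v : utility_fn) : Prop :=
  (v L Rej > v H Rej)%N /\ (v H Rej > v H Acc)%N /\ (v H Acc > v L Acc)%N.
Definition contingent (v : utility_fn) : Prop :=
  (v H Acc > v H Rej)%N /\ (v L Rej > v L Acc)%N.

Definition instance_ok (aF aU : R) (B N : nat) (v : 'I_N -> utility_fn) : Prop :=
  (forall n w a, (v n w a <= B)%N) /\
  (forall n, basic_util (v n)) /\
  (forall n, friendly (v n) \/ unfriendly (v n) \/ contingent (v n)) /\
  (#|[set n : 'I_N | `[< friendly (v n) >]]|%:Z = Num.floor (aF * N%:R)) /\
  (#|[set n : 'I_N | `[< unfriendly (v n) >]]|%:Z = Num.floor (aU * N%:R)).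

(* A (mixed) strategy profile: sigma n s = probability that agent n votes A
   on receiving signal s. *)
Definition profile (N : nat) := 'I_N -> signal -> R.

Definition valid_profile N (sigma : profile N) : Prop :=
  forall n s, 0 <= sigma n s <= 1.

Definition regular N (v : 'I_N -> utility_fn) (sigma : profile N) : Prop :=
  forall n, (friendly (v n) -> forall s, sigma n s = 1) /\
            (unfriendly (v n) -> forall s, sigma n s = 0).

(* Pr[signal = h | W = w]; Pr[signal = l | W = w] = 1 - this. *)
Definition Ph (PhL PhH : R) (w : world) : R :=
  match w with L => PhL | H => PhH end.

Definition pvoteA (PhL PhH : R) (w : world) (s : signal -> R) : R :=
  Ph PhL PhH w * s true + (1 - Ph PhL PhH w) * s false.

Definition lambdaA (mu PhL PhH : R) N (sigma : profile N) (w : world) : R :=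
  \sum_(S : {set 'I_N} | mu * N%:R <= #|S|%:R)
     (\prod_(i in S) pvoteA PhL PhH w (sigma i)) *
     (\prod_(i in ~: S) (1 - pvoteA PhL PhH w (sigma i))).

Definition lambdaR (mu PhL PhH : R) N (sigma : profile N) (w : world) : R :=
  1 - lambdaA mu PhL PhH sigma w.

Definition prior (PL PH : R) (w : world) : R :=
  match w with L => PL | H => PH end.

Definition fidelity (mu PL PH PhL PhH : R) N (sigma : profile N) : R :=
  PL * lambdaR mu PhL PhH sigma L + PH * lambdaA mu PhL PhH sigma H.

Definition exp_util (mu PL PH PhL PhH : R) N (v : 'I_N -> utility_fn)
  (sigma : profile N) (n : 'I_N) : R :=
  \sum_(w <- [:: L; H])
    prior PL PH w * (lambdaA mu PhL PhH sigma w * (v n w Acc)%:R +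
                     lambdaR mu PhL PhH sigma w * (v n w Rej)%:R).

Definition strong_BNE (mu PL PH PhL PhH : R) N (v : 'I_N -> utility_fn)
  (sigma : profile N) (eps : R) : Prop :=
  ~ exists (D : {set 'I_N}) (sigma' : profile N),
      [/\ valid_profile sigma',
          (forall n, n \notin D -> sigma' n = sigma n),
          (forall n, n \in D ->
             exp_util mu PL PH PhL PhH v sigma n <= exp_util mu PL PH PhL PhH v sigma' n) &
          (exists2 n, n \in D &
             exp_util mu PL PH PhL PhH v sigma n + eps < exp_util mu PL PH PhL PhH v sigma' n)].

End Model.

From HB Require Import structures.
From mathcomp Require Import all_boot all_order all_algebra.
From mathcomp Require Import all_classical all_reals all_analysis.
From mathcomp Require Import ring lra.
Import Order.TTheory GRing.Theory Num.Theory.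
Import numFieldNormedType.Exports.
Local Open Scope classical_set_scope.
Local Open Scope ring_scope.
Set Implicit Arguments. Unset Strict Implicit.

(* A deviation changes agent [n]'s utility by [X a_n + Y b_n], where [X], [Y]
   are the prior-weighted changes of the probability that A wins in states L
   and H, and [a_n], [b_n] are [n]'s payoff differences between A and R.  Both
   [-X] and [Y] are at most the fidelity gap [d = 1 - A(Sigma)].  Under a regular
   profile the acceptance probability is monotone in the individual votes, so a
   coalition in which nobody loses can only raise [X] (resp. lower [Y]) if it
   contains a non-friendly (resp. non-unfriendly) member, whose non-negative
   gain bounds [X] (resp. [-Y]) by [B d]; hence nobody gains more than
   [(B^2 + 2B) d].  Conversely, if [d >= delta] infinitely often, let all
   contingent agents vote A with a probability whose induced expected A-share
   is [mu - g] in state L and [mu + g] in state H: by Chebyshev the informed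
   decision is then reached with probability [1 - O(1/N)], so each contingent
   agent gains about [delta]. *)

Section IndependentTrials.
Variables (R : realFieldType) (I : finType).
Implicit Types (p q : I -> R) (S : {set I}) (P : pred {set I}).

Definition indep_prob p S := \prod_(i in S) p i * \prod_(i in ~: S) (1 - p i).

Definition tail_prob (k : R) p := \sum_(S : {set I} | k <= #|S|%:R) indep_prob p S.

Definition probs01 p := forall i, 0 <= p i <= 1.

Lemma indep_probE p S :
  indep_prob p S = \prod_i (if i \in S then p i else 1 - p i).
Proof.
rewrite /indep_prob [RHS](bigID (mem S)) /=; congr (_ * _); apply: eq_big => i //=.
- by move=> ->.
- by rewrite inE.
- by rewrite inE => /negbTE ->.
Qed.

Lemma sum_indep_prob_prod p (g : I -> bool -> R) :
  \sum_S indep_prob p S * \prod_i g i (i \in S) =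
  \prod_i (p i * g i true + (1 - p i) * g i false).
Proof.
rewrite bigA_distr; apply: eq_bigr => S _.
by rewrite indep_probE -big_split; apply: eq_bigr => i _; case: (i \in S).
Qed.

Lemma indep_prob_ge0 p S : probs01 p -> 0 <= indep_prob p S.
Proof.
move=> hp; rewrite indep_probE; apply: prodr_ge0 => i _.
by case: (i \in S); have := hp i; lra.
Qed.

Lemma sum_indep_prob p : \sum_S indep_prob p S = 1.
Proof.
transitivity (\sum_S indep_prob p S * \prod_i (fun _ _ => 1 : R) i (i \in S)).
  by apply: eq_bigr => S _; rewrite big1_eq mulr1.
by rewrite (sum_indep_prob_prod p (fun _ _ => 1)) big1 // => i _; rewrite !mulr1 subrKC.
Qed.

Lemma sum_indep_prob_le1 p P : probs01 p -> \sum_(S | P S) indep_prob p S <= 1.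
Proof.
move=> hp; rewrite -(sum_indep_prob p) [leRHS](bigID P) /= lerDl.
by apply: sumr_ge0 => S _; apply: indep_prob_ge0.
Qed.

Lemma tail_prob_ge0 k p : probs01 p -> 0 <= tail_prob k p.
Proof. by move=> hp; apply: sumr_ge0 => S _; apply: indep_prob_ge0. Qed.

Lemma tail_prob_le1 k p : probs01 p -> tail_prob k p <= 1.
Proof. exact: sum_indep_prob_le1. Qed.

Lemma tail_probC k p :
  1 - tail_prob k p = \sum_(S : {set I} | ~~ (k <= #|S|%:R)) indep_prob p S.
Proof.
rewrite -[X in X - _](sum_indep_prob p) (bigID (fun S : {set I} => k <= #|S|%:R)) /=.
by rewrite /tail_prob addrAC subrr add0r.
Qed.

Lemma indep_prob_covariance p i j :
  \sum_S indep_prob p S * (((i \in S)%:R - p i) * ((j \in S)%:R - p j)) =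
  if i == j then p i * (1 - p i) else 0.
Proof.
pose centered k (b : bool) := (if k == i then b%:R - p k else 1) *
                              (if k == j then b%:R - p k else 1).
have prod_centered S : \prod_k centered k (k \in S) =
    ((i \in S)%:R - p i) * ((j \in S)%:R - p j).
  by rewrite big_split /= -!big_mkcond !big_pred1_eq.
under eq_bigr do rewrite -prod_centered.
rewrite sum_indep_prob_prod (bigD1 i) //= /centered eqxx.
case: eqP => [<-|_] /=.
- rewrite big1 => [|k /negbTE kNi]; last by rewrite kNi /=; ring.
  ring.
- by rewrite [X in X * _](_ : _ = 0) ?mul0r //; ring.
Qed.

Lemma indep_prob_variance p :
  \sum_S indep_prob p S * (#|S|%:R - \sum_i p i) ^+ 2 = \sum_i p i * (1 - p i).
Proof.
have centeredE S : #|S|%:R - \sum_i p i = \sum_i ((i \in S)%:R - p i).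
  by rewrite sumrB -sum1_card natr_sum big_mkcond; congr (_ - _);
     apply: eq_bigr => i _; case: (i \in S).
transitivity (\sum_S \sum_i \sum_j
    indep_prob p S * (((i \in S)%:R - p i) * ((j \in S)%:R - p j))).
  apply: eq_bigr => S _; rewrite centeredE expr2 mulr_suml mulr_sumr.
  by apply: eq_bigr => i _; rewrite !mulr_sumr.
rewrite exchange_big; apply: eq_bigr => i _; rewrite exchange_big /=.
under eq_bigr do rewrite indep_prob_covariance.
by rewrite -big_mkcond /= (big_pred1 i) // => j; rewrite eq_sym.
Qed.

Lemma indep_prob_chebyshev p P t : probs01 p -> 0 < t ->
  (forall S, P S -> t ^+ 2 <= (#|S|%:R - \sum_i p i) ^+ 2) ->
  \sum_(S | P S) indep_prob p S <= #|I|%:R / t ^+ 2.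
Proof.
move=> hp t_gt0 farP; rewrite ler_pdivlMr ?exprn_gt0 //.
have var_le : \sum_i p i * (1 - p i) <= #|I|%:R.
  by rewrite -sum1_card natr_sum; apply: ler_sum => i _; have := hp i; nra.
apply: le_trans var_le; rewrite -indep_prob_variance mulr_suml [leRHS](bigID P) /=.
rewrite -[leLHS]addr0; apply: lerD.
  by apply: ler_sum => S PS; apply: ler_wpM2l; [apply: indep_prob_ge0 | apply: farP].
by apply: sumr_ge0 => S _; apply: mulr_ge0; [apply: indep_prob_ge0 | apply: sqr_ge0].
Qed.

Lemma tail_prob_le k t p : probs01 p -> 0 < t -> \sum_i p i <= k - t ->
  tail_prob k p <= #|I|%:R / t ^+ 2.
Proof.
move=> hp t_gt0 mean_le; apply: indep_prob_chebyshev => // S k_le.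
by rewrite !expr2; nra.
Qed.

Lemma tail_probC_le k t p : probs01 p -> 0 < t -> k + t <= \sum_i p i ->
  1 - tail_prob k p <= #|I|%:R / t ^+ 2.
Proof.
move=> hp t_gt0 mean_ge; rewrite tail_probC; apply: indep_prob_chebyshev => // S.
by rewrite -ltNge !expr2 => ?; nra.
Qed.

Definition upward_closed P := forall S T : {set I}, S \subset T -> P S -> P T.

Lemma indep_prob_mono1 P p q i : upward_closed P -> probs01 p ->
  (forall j, j != i -> q j = p j) -> p i <= q i ->
  \sum_(S | P S) indep_prob p S <= \sum_(S | P S) indep_prob q S.
Proof.
move=> upP hp qE le_i.
pose others S := \prod_(j | j != i) (if j \in S then p j else 1 - p j).
have indep_probE_others r : (forall j, j != i -> r j = p j) -> forall S,
    indep_prob r S = (if i \in S then r i else 1 - r i) * others S.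
  move=> rE S; rewrite indep_probE (bigD1 i) //=; congr (_ * _).
  by apply: eq_bigr => j /rE ->.
(* The event probability is affine in [p i]; pairing [S] with [toggle S] shows
   that its slope is nonnegative. *)
pose u S : R := (P S)%:R.
pose sg S : R := if i \in S then 1 else -1.
have diffE : \sum_(S | P S) indep_prob q S - \sum_(S | P S) indep_prob p S =
    (q i - p i) * \sum_S u S * sg S * others S.
  rewrite -sumrB big_mkcond mulr_sumr; apply: eq_bigr => S _.
  rewrite (indep_probE_others q) // (indep_probE_others p) // /u /sg.
  by case: (P S); case: (i \in S) => /=; ring.
pose toggle S := if i \in S then S :\ i else i |: S.
have toggleK : involutive toggle.
  move=> S; rewrite /toggle; case: (boolP (i \in S)) => iS.
  - by rewrite finset.setD11 finset.setD1K.
  - by rewrite finset.setU11 finset.setU1K.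
have others_toggle S : others (toggle S) = others S.
  apply: eq_bigr => j ji; rewrite /toggle.
  by case: (i \in S); rewrite ?in_setD1 ?in_setU1 (negbTE ji).
have sg_toggle S : sg (toggle S) = - sg S.
  rewrite /sg /toggle; case: (boolP (i \in S)) => iS.
  - by rewrite finset.setD11.
  - by rewrite finset.setU11 opprK.
have u_toggle S : 0 <= (u S - u (toggle S)) * sg S.
  rewrite /u /sg /toggle; case: ifP => iS.
  - have := upP _ _ (finset.subD1set S i).
    by case: (P S); case: (P (S :\ i)) => //= /(_ isT); lra.
  - have := upP _ _ (finset.subsetUr [set i] S).
    by case: (P S); case: (P (i |: S)) => //= /(_ isT); lra.
have others_ge0 S : 0 <= others S.
  by apply: prodr_ge0 => j _; case: (j \in S); have := hp j; lra.
have : 0 <= \sum_S u S * sg S * others S.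
  have sum_toggle : \sum_S u S * sg S * others S =
      - \sum_S u (toggle S) * sg S * others S.
    rewrite (reindex_inj (can_inj toggleK)) /= -sumrN; apply: eq_bigr => S _.
    by rewrite sg_toggle others_toggle; ring.
  suff : 0 <= \sum_S (u S * sg S * others S - u (toggle S) * sg S * others S).
    by rewrite sumrB; lra.
  by apply: sumr_ge0 => S _; rewrite -!mulrBl; apply: mulr_ge0.
by move=> ?; rewrite -subr_ge0 diffE mulr_ge0 // subr_ge0.
Qed.

Lemma indep_prob_mono P p q : upward_closed P -> probs01 p -> probs01 q ->
  (forall i, p i <= q i) ->
  \sum_(S | P S) indep_prob p S <= \sum_(S | P S) indep_prob q S.
Proof.
move=> upP hp hq le_pq.
pose mix (s : seq I) j := if j \in s then q j else p j.
have mix_probs s : probs01 (mix s) by move=> j; rewrite /mix; case: ifP.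
have -> : q = mix (enum I) by apply: funext => j; rewrite /mix mem_enum.
elim: (enum I) => [|x s IH] //.
apply: le_trans IH (indep_prob_mono1 (i := x) upP (mix_probs s) _ _).
- by move=> j jx; rewrite /mix inE (negbTE jx).
- by rewrite /mix inE eqxx; case: (x \in s).
Qed.

Lemma tail_prob_mono k p q : probs01 p -> probs01 q -> (forall i, p i <= q i) ->
  tail_prob k p <= tail_prob k q.
Proof.
apply: indep_prob_mono => S T /subset_leq_card le_ST /le_trans; apply.
by rewrite ler_nat.
Qed.
End IndependentTrials.

Section GainArithmetic.
Variable R : realFieldType.

(* [a i], [b i]: payoff differences of member [i]; [X], [Y]: prior-weighted
   changes of the acceptance probabilities; [d]: the fidelity gap. *)
Lemma coalition_gain_le (I : finType) (D : {set I}) (a b : I -> R) (X Y d Bn : R) :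
  0 <= d -> -d <= X -> Y <= d ->
  (forall i, i \in D -> [/\ -Bn <= a i, a i <= b i & b i <= Bn]) ->
  (forall i, i \in D -> 0 <= X * a i + Y * b i) ->
  ((forall i, i \in D -> -1 < a i) -> X <= 0) ->
  ((forall i, i \in D -> b i < 1) -> 0 <= Y) ->
  forall g, g \in D -> X * a g + Y * b g <= (Bn ^+ 2 + 2 * Bn) * d.
Proof.
move=> d_ge0 X_ge Y_le bnd gain_ge0 X_le0 Y_ge0 g gD.
have [ag abg bg] := bnd g gD.
have Bn_ge0 : 0 <= Bn by lra.
have Bnd_ge0 : 0 <= Bn * d by apply: mulr_ge0.
have Bn2d_ge0 : 0 <= Bn * (Bn * d) by apply: mulr_ge0.
have witL : 0 < X -> exists2 c, c \in D & a c <= -1.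
  have [//|noc] := pselect (exists2 c, c \in D & a c <= -1).
  rewrite ltNge X_le0 // => i iD.
  by rewrite ltNge; apply/negP => ac; apply: noc; exists i.
have witH : Y < 0 -> exists2 c, c \in D & 1 <= b c.
  have [//|noc] := pselect (exists2 c, c \in D & 1 <= b c).
  rewrite ltNge Y_ge0 // => i iD.
  by rewrite ltNge; apply/negP => bc; apply: noc; exists i.
rewrite (_ : _ * d = Bn * (Bn * d) + 2 * (Bn * d)); last by ring.
case: (lerP X 0) => [X_le|X_gt]; case: (lerP 0 Y) => [Y_ge|Y_lt].
- have : X * a g <= Bn * d by nra.
  have : Y * b g <= Bn * d by nra.
  lra.
- have [c cD bc] := witH Y_lt; have [ac _ _] := bnd c cD; have gc := gain_ge0 c cD.
  have Xac : X * a c <= Bn * d by nra.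
  have Y_ge : - Y <= Bn * d.
    have : 0 <= (- Y) * (b c - 1) by apply: mulr_ge0; lra.
    nra.
  have : X * a g <= Bn * d by nra.
  have : 0 <= (- Y) * (b g + Bn) by apply: mulr_ge0; lra.
  have : 0 <= Bn * (Bn * d + Y) by apply: mulr_ge0; lra.
  lra.
- have [c cD ac] := witL X_gt; have [_ _ bc] := bnd c cD; have gc := gain_ge0 c cD.
  have Ybc : Y * b c <= Bn * d by nra.
  have X_le : X <= Bn * d.
    have : 0 <= X * (- a c - 1) by apply: mulr_ge0; lra.
    nra.
  have : 0 <= X * (Bn - a g) by apply: mulr_ge0; lra.
  have : 0 <= Bn * (Bn * d - X) by apply: mulr_ge0; lra.
  have : Y * b g <= Bn * d by nra.
  lra.
(* a member with [a c <= -1] and one with [1 <= b c'] force [X = - Y] *)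
- have [c cD ac] := witL X_gt; have [c' c'D bc'] := witH Y_lt.
  have [_ abc _] := bnd c cD; have [_ abc' _] := bnd c' c'D.
  have gc := gain_ge0 c cD; have gc' := gain_ge0 c' c'D.
  have : X <= - Y by nra.
  have : - Y <= X by nra.
  nra.
Qed.

Lemma contingent_gain_ge (PL PH lL lH mL mH a b Bn : R) :
  0 <= PL -> 0 <= PH -> 0 <= lL -> lH <= 1 -> 0 <= mL -> mH <= 1 ->
  -Bn <= a -> a <= -1 -> 1 <= b -> b <= Bn ->
  PL * lL + PH * (1 - lH) - Bn * (PL * mL + PH * (1 - mH)) <=
  PL * (mL - lL) * a + PH * (mH - lH) * b.
Proof.
move=> PL_ge0 PH_ge0 lL_ge0 lH_le1 mL_ge0 mH_le1 a_ge a_le b_ge b_le.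
have : 0 <= PL * lL * (- a - 1) by rewrite !mulr_ge0 // subr_ge0 lerNr.
have : 0 <= PL * mL * (a + Bn) by rewrite !mulr_ge0 // -lerBlDr sub0r.
have : 0 <= PH * (1 - lH) * (b - 1) by rewrite !mulr_ge0 // subr_ge0.
have : 0 <= PH * (1 - mH) * (Bn - b) by rewrite !mulr_ge0 // subr_ge0.
nra.
Qed.

Lemma vote_count_bounds (nF nU nC Nr aF aU q : R) : nF + nU + nC = Nr ->
  aF * Nr - 1 < nF <= aF * Nr -> aU * Nr - 1 < nU <= aU * Nr -> 0 <= q <= 1 ->
  Nr * (aF + (1 - aF - aU) * q) - 1 <= nF + nC * q <=
  Nr * (aF + (1 - aF - aU) * q) + 1.
Proof.
move=> sumN /andP[nF_gt nF_le] /andP[nU_gt nU_le] /andP[q_ge0 q_le1].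
have : 0 <= (nF - aF * Nr + 1) * (1 - q) by apply: mulr_ge0; lra.
have : 0 <= (aF * Nr - nF) * (1 - q) by apply: mulr_ge0; lra.
have : 0 <= (nU - aU * Nr + 1) * q by apply: mulr_ge0; lra.
have : 0 <= (aU * Nr - nU) * q by apply: mulr_ge0; lra.
have -> : nC = Nr - nF - nU by lra.
by move=> *; apply/andP; split; nra.
Qed.
End GainArithmetic.

Lemma not_cvg_often_below (R : realType) (u : nat -> R) (l : R) :
  (forall n, u n <= l) -> ~ (u @ \oo --> l) ->
  exists2 e, 0 < e & forall M, exists2 N, (M <= N)%N & u N <= l - e.
Proof.
move=> u_le ncvg; apply: contrapT => often; apply: ncvg.
apply/cvgrPdist_le => e e_gt0; apply: contrapT => nnear; apply: often.
exists e => // M; apply: contrapT => above; apply: nnear; exists M => // N /= MN.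
rewrite ger0_norm ?subr_ge0 //; rewrite lerBlDr addrC -lerBlDr.
by apply: contrapT => /negP; rewrite -ltNge => /ltW ?; apply: above; exists N.
Qed.

Lemma chebyshev_bound_eventually (R : realType) (g dl Bn : R) :
  0 < g -> 0 < dl -> 0 <= Bn -> exists N0 : nat, forall N, (N0 <= N)%N ->
    2 <= g * N%:R /\ Bn * (N%:R / (g * N%:R / 2) ^+ 2) <= dl / 4.
Proof.
move=> g_gt0 dl_gt0 Bn_ge0.
exists (Num.truncn (2 / g + 16 * Bn / (g ^+ 2 * dl))).+1 => N N0N.
have C_lt : 2 / g + 16 * Bn / (g ^+ 2 * dl) < N%:R.
  by apply: lt_le_trans (truncnS_gt _) _; rewrite ler_nat.
have term_ge0 : 0 <= 16 * Bn / (g ^+ 2 * dl).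
  by rewrite divr_ge0 ?mulr_ge0 // ?exprn_ge0 ?ltW.
have two_g_gt0 : 0 < 2 / g by apply: divr_gt0.
have N_gt0 : 0 < N%:R :> R by lra.
split.
  by rewrite -ler_pdivrMl //; lra.
rewrite (_ : _ / _ = 4 / (g ^+ 2 * N%:R)); last first.
  by field; rewrite !gt_eqF.
rewrite mulrA ler_pdivrMr ?mulr_gt0 ?exprn_gt0 //.
have : 16 * Bn / (g ^+ 2 * dl) < N%:R by lra.
rewrite ltr_pdivrMr ?mulr_gt0 ?exprn_gt0 //; nra.
Qed.

Section Voting.
Variables (R : realType) (mu PL PH PhL PhH : R).
Hypotheses (PhL_ge0 : 0 <= PhL) (PhH_le1 : PhH <= 1) (PhL_lt_PhH : PhL < PhH).

Local Notation lambda := (lambdaA mu PhL PhH).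
Local Notation pvote := (pvoteA PhL PhH).
Local Notation utility := (exp_util mu PL PH PhL PhH).

Definition strategy01 (st : signal -> R) := forall b, 0 <= st b <= 1.

Lemma pvoteA01 w st : strategy01 st -> 0 <= pvote w st <= 1.
Proof.
move=> st01; have /andP[st1_ge0 st1_le1] := st01 true.
have /andP[st0_ge0 st0_le1] := st01 false.
have /andP[Ph_ge0 Ph_le1] : 0 <= Ph PhL PhH w <= 1.
  move: PhL_ge0 PhH_le1 PhL_lt_PhH; rewrite /Ph.
  by case: w => * /=; apply/andP; split; lra.
have : 0 <= Ph PhL PhH w * st true by apply: mulr_ge0.
have : 0 <= (1 - Ph PhL PhH w) * st false by apply: mulr_ge0; lra.
have : 0 <= Ph PhL PhH w * (1 - st true) by apply: mulr_ge0; lra.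
have : 0 <= (1 - Ph PhL PhH w) * (1 - st false) by apply: mulr_ge0; lra.
by rewrite /pvoteA => *; apply/andP; split; lra.
Qed.

Lemma pvoteA_cst w st c : (forall b, st b = c) -> pvote w st = c.
Proof. by move=> stE; rewrite /pvoteA !stE; ring. Qed.

Lemma probs01_pvoteA N (s : profile R N) w :
  valid_profile s -> probs01 (fun n => pvote w (s n)).
Proof. by move=> s01 n; apply: pvoteA01. Qed.

Lemma lambdaAE N (s : profile R N) w :
  lambda s w = tail_prob (mu * N%:R) (fun n => pvote w (s n)).
Proof. by []. Qed.

Lemma lambdaA01 N (s : profile R N) w : valid_profile s -> 0 <= lambda s w <= 1.
Proof.
by move=> s01; rewrite lambdaAE tail_prob_ge0 ?tail_prob_le1 //; apply: probs01_pvoteA.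
Qed.

Lemma lambdaA_mono N (s s' : profile R N) w : valid_profile s -> valid_profile s' ->
  (forall n, pvote w (s n) <= pvote w (s' n)) -> lambda s w <= lambda s' w.
Proof.
by move=> s01 s'01; rewrite !lambdaAE; apply: tail_prob_mono; apply: probs01_pvoteA.
Qed.

Definition acc_gain (v : utility_fn) (w : world) : R := (v w Acc)%:R - (v w Rej)%:R.

Lemma exp_util_sub N (v : 'I_N -> utility_fn) (s s' : profile R N) n :
  utility v s' n - utility v s n =
  PL * (lambda s' L - lambda s L) * acc_gain (v n) L +
  PH * (lambda s' H - lambda s H) * acc_gain (v n) H.
Proof. by rewrite /exp_util !big_cons !big_nil /= /lambdaR /acc_gain; ring. Qed.

Lemma one_sub_fidelity N (s : profile R N) : PL + PH = 1 ->
  1 - fidelity mu PL PH PhL PhH s = PL * lambda s L + PH * (1 - lambda s H).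
Proof. by move=> prior1; rewrite /fidelity /lambdaR -{1}prior1; ring. Qed.

Lemma fidelity_le1 N (s : profile R N) : 0 <= PL -> 0 <= PH -> PL + PH = 1 ->
  valid_profile s -> fidelity mu PL PH PhL PhH s <= 1.
Proof.
move=> PL_ge0 PH_ge0 prior1 s01; rewrite -subr_ge0 one_sub_fidelity //.
have /andP[lL_ge0 _] := lambdaA01 L s01; have /andP[_ lH_le1] := lambdaA01 H s01.
by rewrite addr_ge0 ?mulr_ge0 ?subr_ge0.
Qed.

Lemma acc_gain_bounds (B : nat) v w : (forall w a, (v w a <= B)%N) ->
  - B%:R <= acc_gain v w <= B%:R.
Proof.
move=> v_le; have := v_le w Acc; have := v_le w Rej; rewrite -!(ler_nat R) /acc_gain.
by have := ler0n R (v w Acc); have := ler0n R (v w Rej); move=> *; apply/andP; split; lra.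
Qed.

Lemma natr_ltD1 (m n : nat) : (m < n)%N -> m%:R + 1 <= n%:R :> R.
Proof. by rewrite natr1 ler_nat. Qed.

Lemma acc_gainLH v : basic_util v -> acc_gain v L <= acc_gain v H.
Proof. by rewrite /acc_gain => -[/natr_ltD1 ? /natr_ltD1 ?]; lra. Qed.

Lemma acc_gainL_le v : unfriendly v \/ contingent v -> acc_gain v L <= -1.
Proof.
rewrite /acc_gain => -[[LR_HR [HR_HA HA_LA]] | [_ /natr_ltD1]]; last by lra.
by have /natr_ltD1 := ltn_trans HA_LA (ltn_trans HR_HA LR_HR); lra.
Qed.

Lemma acc_gainH_ge v : friendly v \/ contingent v -> 1 <= acc_gain v H.
Proof.
rewrite /acc_gain => -[[HA_LA [LA_LR LR_HR]] | [/natr_ltD1 ? _]]; last by lra.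
by have /natr_ltD1 := ltn_trans LR_HR (ltn_trans LA_LR HA_LA); lra.
Qed.

Lemma lambdaA_friendly_deviation N (v : 'I_N -> utility_fn) (s s' : profile R N)
    (D : {set 'I_N}) w :
  valid_profile s -> valid_profile s' -> regular v s ->
  (forall n, n \notin D -> s' n = s n) -> (forall n, n \in D -> friendly (v n)) ->
  lambda s' w <= lambda s w.
Proof.
move=> s01 s'01 reg_s s'E fr; apply: lambdaA_mono => // n.
have [nD|/s'E -> //] := boolP (n \in D).
by rewrite (pvoteA_cst _ ((reg_s n).1 (fr n nD))); have /andP[] := pvoteA01 w (s'01 n).
Qed.

Lemma lambdaA_unfriendly_deviation N (v : 'I_N -> utility_fn) (s s' : profile R N)
    (D : {set 'I_N}) w :
  valid_profile s -> valid_profile s' -> regular v s ->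
  (forall n, n \notin D -> s' n = s n) -> (forall n, n \in D -> unfriendly (v n)) ->
  lambda s w <= lambda s' w.
Proof.
move=> s01 s'01 reg_s s'E unfr; apply: lambdaA_mono => // n.
have [nD|/s'E -> //] := boolP (n \in D).
by rewrite (pvoteA_cst _ ((reg_s n).2 (unfr n nD))); have /andP[] := pvoteA01 w (s'01 n).
Qed.

Lemma regular_strong_BNE (B : nat) N (v : 'I_N -> utility_fn) (s : profile R N) :
  0 <= PL -> 0 <= PH -> PL + PH = 1 ->
  (forall n w a, (v n w a <= B)%N) -> (forall n, basic_util (v n)) ->
  (forall n, friendly (v n) \/ unfriendly (v n) \/ contingent (v n)) ->
  valid_profile s -> regular v s ->
  strong_BNE mu PL PH PhL PhH v s
    ((B%:R ^+ 2 + 2 * B%:R) * (1 - fidelity mu PL PH PhL PhH s)).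
Proof.
move=> PL_ge0 PH_ge0 prior1 v_le basic types s01 reg_s.
move=> [D [s' [s'01 s'E weak [g gD]]]]; apply/negP; rewrite -leNgt -lerBlDl.
have /andP[lL_ge0 lL_le1] := lambdaA01 L s01.
have /andP[lH_ge0 lH_le1] := lambdaA01 H s01.
have /andP[mL_ge0 mL_le1] := lambdaA01 L s'01.
have /andP[mH_ge0 mH_le1] := lambdaA01 H s'01.
have PLl : 0 <= PL * lambda s L by apply: mulr_ge0.
have PHl : 0 <= PH * (1 - lambda s H) by apply: mulr_ge0; lra.
rewrite exp_util_sub one_sub_fidelity //.
apply: (coalition_gain_le (a := fun n => acc_gain (v n) L)
                          (b := fun n => acc_gain (v n) H) _ _ _ _ _ _ _ gD) => //.
- by rewrite addr_ge0.
- have : 0 <= PL * lambda s' L by apply: mulr_ge0.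
  lra.
- have : PH * lambda s' H <= PH by rewrite ler_piMr.
  lra.
- move=> n _; have /andP[? ?] := acc_gain_bounds L (v_le n).
  by have /andP[? ?] := acc_gain_bounds H (v_le n); split => //; apply: acc_gainLH.
- by move=> n nD; rewrite -exp_util_sub subr_ge0 weak.
- move=> allF; rewrite mulr_ge0_le0 // subr_le0.
  apply: lambdaA_friendly_deviation s'01 reg_s s'E _ => // n nD.
  have [//|/acc_gainL_le] := types n; have := allF n nD; lra.
- move=> allU; rewrite mulr_ge0 // subr_ge0.
  apply: lambdaA_unfriendly_deviation s'01 reg_s s'E _ => // n nD.
  have := allU n nD; case: (types n) => [fr | [// | ct]].
  + by have := acc_gainH_ge (or_introl fr); lra.
  + by have := acc_gainH_ge (or_intror ct); lra.
Qed.

Lemma straddling_strategy t : 0 < t < 1 ->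
  exists2 st, strategy01 st &
    exists2 h, 0 < h & pvote L st = t - h /\ pvote H st = t + h.
Proof.
move: PhL_ge0 PhH_le1 PhL_lt_PhH => PhL0 PhH1 PhLH /andP[t_gt0 t_lt1].
set k := t * (1 - t); set m := (PhL + PhH) / 2.
have k_gt0 : 0 < k by rewrite mulr_gt0 // subr_gt0.
have k_le : k <= t /\ k <= 1 - t by split; rewrite /k; nra.
have m01 : 0 <= m <= 1 by apply/andP; split; rewrite /m; lra.
(* votes A with probability [t + k * (Ph w - m)] in state [w] *)
exists (fun b => if b then t - k * m + k else t - k * m).
  by case; apply/andP; split; nra.
exists (k * (PhH - PhL) / 2); first by rewrite divr_gt0 // mulr_gt0 // subr_gt0.
by rewrite /pvoteA /m /=; split; field.
Qed.

Lemma separating_strategy aF aU : 0 <= aF -> 0 <= aU -> aF < mu -> aU < 1 - mu ->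
  exists2 st, strategy01 st & exists2 g, 0 < g &
    aF + (1 - aF - aU) * pvote L st = mu - g /\
    aF + (1 - aF - aU) * pvote H st = mu + g.
Proof.
move=> aF_ge0 aU_ge0 aF_lt aU_lt; set c := 1 - aF - aU.
have c_gt0 : 0 < c by rewrite /c; lra.
have t01 : 0 < (mu - aF) / c < 1.
  apply/andP; split; first by rewrite divr_gt0 // subr_gt0.
  by rewrite ltr_pdivrMr // mul1r /c; lra.
have [st st01 [h h_gt0 [stL stH]]] := straddling_strategy t01.
exists st => //; exists (c * h); first exact: mulr_gt0.
by rewrite stL stH; split; field; rewrite gt_eqF.
Qed.

Lemma friendly_not_unfriendly v : friendly v -> ~ unfriendly v.
Proof.
move=> [_ [LA_LR _]] [LR_HR [HR_HA HA_LA]].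
by have := ltn_trans HA_LA (ltn_trans HR_HA (ltn_trans LR_HR LA_LR)); rewrite ltnn.
Qed.

Definition friendly_agents N (v : 'I_N -> utility_fn) :=
  [set n | `[< friendly (v n) >]]%SET.
Definition unfriendly_agents N (v : 'I_N -> utility_fn) :=
  [set n | `[< unfriendly (v n) >]]%SET.
Definition contingent_agents N (v : 'I_N -> utility_fn) :=
  ~: (friendly_agents v :|: unfriendly_agents v).

Definition deviation N (D : {set 'I_N}) (s : profile R N) (st : signal -> R) :
  profile R N := fun n => if n \in D then st else s n.

Lemma card_agent_types N (v : 'I_N -> utility_fn) :
  (#|friendly_agents v| + #|unfriendly_agents v| + #|contingent_agents v| = N)%N.
Proof.
have FU0 : #|friendly_agents v :&: unfriendly_agents v| = 0%N.
  apply: eq_card0 => n; rewrite !inE; apply/andP => -[/asboolP fr /asboolP unfr].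
  exact: friendly_not_unfriendly fr unfr.
rewrite -[in RHS](card_ord N) -(cardsC (friendly_agents v :|: unfriendly_agents v)).
by rewrite -cardsUI FU0 addn0.
Qed.

Lemma contingent_agentsP N (v : 'I_N -> utility_fn) n :
  (forall n, friendly (v n) \/ unfriendly (v n) \/ contingent (v n)) ->
  n \in contingent_agents v -> contingent (v n).
Proof.
move=> types; rewrite !inE negb_or => /andP[/asboolPn nfr /asboolPn nunfr].
by case: (types n) => [|[|]].
Qed.

Lemma deviation_vote_sum N (v : 'I_N -> utility_fn) (s : profile R N) st w :
  regular v s ->
  \sum_n pvote w (deviation (contingent_agents v) s st n) =
  #|friendly_agents v|%:R + #|contingent_agents v|%:R * pvote w st.
Proof.
move=> reg_s.
have sum_mem (A : {set 'I_N}) : \sum_n ((n \in A)%:R : R) = #|A|%:R.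
  rewrite -sum1_card natr_sum [RHS]big_mkcond.
  by apply: eq_bigr => n _; case: (n \in A).
rewrite -!sum_mem mulr_suml -big_split; apply: eq_bigr => n _.
rewrite /deviation /contingent_agents !inE negb_or.
have [/asboolP fr | _] := boolP `[< friendly (v n) >].
  by rewrite (pvoteA_cst _ ((reg_s n).1 fr)) /= mul0r addr0.
have [/asboolP unfr | _] := boolP `[< unfriendly (v n) >].
  by rewrite (pvoteA_cst _ ((reg_s n).2 unfr)) /= mul0r addr0.
by rewrite /= mul1r add0r.
Qed.

Lemma natr_floor_bounds (n : nat) (x : R) : n%:Z = Num.floor x -> x - 1 < n%:R <= x.
Proof.
move=> nE; have := floor_le x; have := floorD1_gt x.
rewrite intrD -nE pmulrn => *; apply/andP; split; lra.
Qed.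

Lemma agent_counts (aF aU : R) (B N : nat) (v : 'I_N -> utility_fn) :
  instance_ok aF aU B v ->
  [/\ aF * N%:R - 1 < #|friendly_agents v|%:R <= aF * N%:R,
      aU * N%:R - 1 < #|unfriendly_agents v|%:R <= aU * N%:R &
      #|friendly_agents v|%:R + #|unfriendly_agents v|%:R +
        #|contingent_agents v|%:R = N%:R :> R].
Proof.
move=> [_ [_ [_ [cardF cardU]]]].
by rewrite !natr_floor_bounds // -!natrD card_agent_types.
Qed.

Lemma contingent_deviation_votes (aF aU : R) (B N : nat) (v : 'I_N -> utility_fn)
    (s : profile R N) st w :
  instance_ok aF aU B v -> regular v s -> strategy01 st ->
  N%:R * (aF + (1 - aF - aU) * pvote w st) - 1 <=
    \sum_n pvote w (deviation (contingent_agents v) s st n) <=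
  N%:R * (aF + (1 - aF - aU) * pvote w st) + 1.
Proof.
move=> inst reg_s st01; have [F_bnd U_bnd cardE] := agent_counts inst.
rewrite deviation_vote_sum //.
exact: vote_count_bounds cardE F_bnd U_bnd (pvoteA01 w st01).
Qed.

Lemma contingent_deviation_gain (B N : nat) (v : 'I_N -> utility_fn)
    (s s' : profile R N) n (eta : R) :
  0 <= PL -> 0 <= PH -> PL + PH = 1 -> valid_profile s -> valid_profile s' ->
  (forall w a, (v n w a <= B)%N) -> contingent (v n) ->
  lambda s' L <= eta -> 1 - lambda s' H <= eta ->
  1 - fidelity mu PL PH PhL PhH s - B%:R * eta <= utility v s' n - utility v s n.
Proof.
move=> PL_ge0 PH_ge0 prior1 s01 s'01 v_le contn lamL lamH.
have /andP[aL_ge _] := acc_gain_bounds L v_le.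
have /andP[_ aH_le] := acc_gain_bounds H v_le.
have /andP[lL_ge0 _] := lambdaA01 L s01; have /andP[_ lH_le1] := lambdaA01 H s01.
have /andP[mL_ge0 _] := lambdaA01 L s'01; have /andP[_ mH_le1] := lambdaA01 H s'01.
rewrite exp_util_sub; apply: le_trans (contingent_gain_ge PL_ge0 PH_ge0 lL_ge0 lH_le1
  mL_ge0 mH_le1 aL_ge (acc_gainL_le (or_intror contn)) (acc_gainH_ge (or_intror contn))
  aH_le).
rewrite one_sub_fidelity // lerD2l lerN2 ler_wpM2l //.
have : PL * lambda s' L <= PL * eta by rewrite ler_wpM2l.
have : PH * (1 - lambda s' H) <= PH * eta by rewrite ler_wpM2l.
nra.
Qed.

Lemma fidelity_gap_not_strong_BNE (aF aU : R) (B N : nat) (v : 'I_N -> utility_fn)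
    (s : profile R N) st (g dl : R) :
  0 <= PL -> 0 <= PH -> PL + PH = 1 -> aF + aU < 1 ->
  instance_ok aF aU B v -> valid_profile s -> regular v s -> strategy01 st ->
  aF + (1 - aF - aU) * pvote L st = mu - g ->
  aF + (1 - aF - aU) * pvote H st = mu + g ->
  0 < dl -> fidelity mu PL PH PhL PhH s <= 1 - dl ->
  2 <= g * N%:R -> B%:R * (N%:R / (g * N%:R / 2) ^+ 2) <= dl / 4 ->
  ~ strong_BNE mu PL PH PhL PhH v s (dl / 4).
Proof.
move=> PL_ge0 PH_ge0 prior1 aFU_lt1 inst s01 reg_s st01 shareL shareH dl_gt0 fid_le
  gN_ge2 eta_le.
set D := contingent_agents v; set s' := deviation D s st.
have s'01 : valid_profile s' by move=> n; rewrite /s' /deviation; case: ifP.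
have N_gt0 : 0 < N%:R :> R.
  by rewrite ltr0n lt0n; apply: contraTneq gN_ge2 => ->; rewrite mulr0 -ltNge ltr0n.
set t := g * N%:R / 2 in eta_le *.
have t_gt0 : 0 < t by rewrite /t; lra.
have lamL : lambda s' L <= N%:R / t ^+ 2.
  rewrite lambdaAE -[in N%:R / _](card_ord N); apply: tail_prob_le => //.
    exact: probs01_pvoteA.
  have /andP[_] := contingent_deviation_votes L inst reg_s st01; rewrite shareL /t.
  lra.
have lamH : 1 - lambda s' H <= N%:R / t ^+ 2.
  rewrite lambdaAE -[in N%:R / _](card_ord N); apply: tail_probC_le => //.
    exact: probs01_pvoteA.
  have /andP[+ _] := contingent_deviation_votes H inst reg_s st01; rewrite shareH /t.
  lra.
have [v_le [_ [types _]]] := inst.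
have gain n : n \in D -> 3 * dl / 4 <= utility v s' n - utility v s n.
  move=> nD; apply: le_trans (contingent_deviation_gain _ _ _ _ _ _ _ lamL lamH) => //.
  - lra.
  - exact: contingent_agentsP types nD.
move=> BNE; apply: BNE; exists D, s'; split => //.
- by move=> n /negbTE nD; rewrite /s' /deviation nD.
- by move=> n /gain; lra.
- have [/andP[_ F_le] /andP[_ U_le] cardE] := agent_counts inst.
  have share_gt0 : 0 < (1 - aF - aU) * N%:R by rewrite mulr_gt0 //; lra.
  have : 0 < #|contingent_agents v|%:R :> R by lra.
  rewrite ltr0n => /card_gt0P [n nD]; exists n => //.
  by have := gain n nD; lra.
Qed.
End Voting.

Unset Implicit Arguments. Set Strict Implicit.
Theorem theorem2 (R : realType) (mu PL PH PhL PhH aF aU : R) (B : nat)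
  (hB : (0 < B)%N)
  (hPL : 0 < PL) (hPH : 0 < PH) (hprior : PL + PH = 1)
  (hPhL : 0 <= PhL) (hPhH : PhH <= 1) (hsig : PhL < PhH)
  (haF : 0 <= aF) (haU : 0 <= aU) (haC : aF + aU <= 1)
  (hFmu : aF < mu) (hUmu : aU < 1 - mu)
  (v : forall N : nat, 'I_N -> utility_fn)
  (sigma : forall N : nat, profile R N)
  (hinst : forall N, instance_ok aF aU B (v N))
  (hvalid : forall N, valid_profile (sigma N))
  (hreg : forall N, regular (v N) (sigma N)) :
  ((fun N => fidelity mu PL PH PhL PhH (sigma N)) @ \oo --> (1 : R) ->
     exists eps : nat -> R,
       (forall N, 0 <= eps N) /\ eps @ \oo --> (0 : R) /\
       forall N, strong_BNE mu PL PH PhL PhH (v N) (sigma N) (eps N))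
  /\
  (~ ((fun N => fidelity mu PL PH PhL PhH (sigma N)) @ \oo --> (1 : R)) ->
     exists2 eps : R, 0 < eps &
       forall M : nat, exists2 N : nat, (M <= N)%N &
         ~ strong_BNE mu PL PH PhL PhH (v N) (sigma N) eps).
Proof.
have [PL_ge0 PH_ge0] := (ltW hPL, ltW hPH).
have fid_le1 N : fidelity mu PL PH PhL PhH (sigma N) <= 1.
  by have := fidelity_le1 mu hPhL hPhH hsig PL_ge0 PH_ge0 hprior (hvalid N).
split=> [fid_cvg | fid_ncvg].
- exists (fun N => (B%:R ^+ 2 + 2 * B%:R) * (1 - fidelity mu PL PH PhL PhH (sigma N))).
  split; [|split].
  + by move=> N; rewrite mulr_ge0 ?subr_ge0.
  + rewrite -[X in _ --> X](mulr0 (B%:R ^+ 2 + 2 * B%:R)) -(subrr (1 : R)).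
    apply: (cvgMr (g := fun N => 1 - fidelity mu PL PH PhL PhH (sigma N))).
    by apply: cvgB => //; apply: cvg_cst.
  + move=> N; have [v_le [basic [types _]]] := hinst N.
    exact: regular_strong_BNE.
- have [dl dl_gt0 often] := not_cvg_often_below fid_le1 fid_ncvg.
  have [st st01 [g g_gt0 [shareL shareH]]] :=
    separating_strategy hPhL hPhH hsig haF haU hFmu hUmu.
  have [N0 N0_large] := chebyshev_bound_eventually g_gt0 dl_gt0 (ler0n R B).
  exists (dl / 4); first by rewrite divr_gt0.
  move=> M; have [N MN fidN] := often (maxn M N0).
  exists N; first exact: leq_trans (leq_maxl _ _) MN.
  have [gN_ge2 eta_le] := N0_large N (leq_trans (leq_maxr _ _) MN).
  have aFU_lt1 : aF + aU < 1 by lra.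
  by have := fidelity_gap_not_strong_BNE hPhL hPhH hsig PL_ge0 PH_ge0 hprior aFU_lt1
    (hinst N) (hvalid N) (hreg N) st01 shareL shareH dl_gt0 fidN gN_ge2 eta_le.
Qed.
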